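(* Let $F$ be a Ferrers diagram of semiperimeter $n+1$, $T\in\mathsf{EWtab}(F)$ and $(a_1,\ldots,a_n)\in\mathbb{Z}^n$. Then $(T,(a_1,\ldots,a_n))\in\mathsf{Rec}_{\mathsf{EW}}(F)$ if and only if $(\Psi(T),(a_1,\ldots,a_n))$ is a canonical decorated permutation.
   Context: Ferrers diagrams and graphs: a Ferrers diagram $F$ (English convention) of semiperimeter $n+1$ has rows and columns labeled by $0,\ldots,n$: the $n+1$ unit steps of its south-east boundary path, traversed from top-right to bottom-left, are labeled $0,\ldots,n$; a vertical step labels the row it bounds, a horizontal step the column it bounds (top row labeled $0$). $\mathsf{rows}(F)$, $\mathsf{cols}(F)$ are the label sets; $F$ has a cell in row $i$, column $j$ iff $i<j$. $G(F)$ has vertex set $\{0,\ldots,n\}$ with edges $\{i,j\}$ for $i\in\mathsf{rows}(F)$, $j\in\mathsf{cols}(F)$, $i<j$. Sandpile model on $G(F)$ with sink $0$: configurations $c\in\mathbb{N}^n$; non-sink $v$ unstable if $c_v\ge\deg(v)$; toppling sends one grain to each neighbour (grains to $0$ disappear); toppling the sink adds one grain to each neighbour of $0$. Recurrent: stable configurations obtainable from $c_v=\deg(v)-1$ by adding grains and stabilizing; $\mathsf{Rec}(G)$ their set; $\mathsf{Rec}^{\mathsf{min}}(G)$: recurrent configurations of minimal total grain count. Canonical toppling of a recurrent $c$: topple the sink ($U^{(0)}_c=\{0\}$), then alternately topple simultaneously all unstable vertices in $\mathsf{cols}(F)$ ($V^{(1)}_c$), all unstable in $\mathsf{rows}(F)$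 ($U^{(1)}_c$), etc.; $\mathsf{CanonTop}(c)=(U^{(0)}_c,V^{(1)}_c,U^{(1)}_c,\ldots)$ is an ordered partition of $\{0,\ldots,n\}$. For $c\in\mathsf{Rec}(G(F))$, $\mathsf{minrec}(c)$ is the configuration $m$ with $m_j=|\{\ell\in V^{(k)}_c: j<\ell,\ k>i\}|$ if $j\in U^{(i)}_c$ and $m_j=|\{\ell\in U^{(k)}_c: j>\ell,\ k\ge i\}|$ if $j\in V^{(i)}_c$. EW-tableaux: $0/1$-fillings $T$ of $F$ with top row all 1s, a 0 in every other row, and no rectangle with 0s in two diagonally opposite corners and 1s in the other two; $\mathsf{EWtab}(F)$ is their set. $\phi_{TC}(T)$ is the configuration with $c_i$ = number of 1s in row $i$ ($i\in\mathsf{rows}(F)$), $c_i$ = number of 0s in column $i$ ($i\in\mathsf{cols}(F)$); $\phi_{TC}$ is a bijection $\mathsf{EWtab}(F)\to\mathsf{Rec}^{\mathsf{min}}(G(F))$ with inverse $\phi_{CT}$. $\mathsf{CanonTop}(T):=\mathsf{CanonTop}(\phi_{TC}(T))=(U^{(0)}_T,V^{(1)}_T,U^{(1)}_T,\ldots)$. $\Psi(T)$ is the permutation of $[n]$ given by the word $\mathsf{inc}(V^{(1)}_T)\,\mathsf{dec}(U^{(1)}_T)\,\mathsf{inc}(V^{(2)}_T)\cdots$ (inc/dec = increasing/decreasing listing). A decorated EW-tableau is a pair $(T,(x_1,\ldots,x_n))$ with $T\in\mathsf{EWtab}(F)$, $0\le x_i<$ (number of 0s in row $i$ of $T$) for $i\in\mathsf{rows}(F)$,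 $0\le x_i<$ (number of 1s in column $i$ of $T$) for $i\in\mathsf{cols}(F)$. Define $\psi(x)=(\phi_{CT}(\mathsf{minrec}(x)),x-\mathsf{minrec}(x))$ for $x\in\mathsf{Rec}(G(F))$ and $\mathsf{Rec}_{\mathsf{EW}}(F)=\psi(\mathsf{Rec}(G(F)))$. Permutations: for a permutation $\pi=\pi_1\cdots\pi_n$ of $[n]$, $\pi_i$ is an ascent top if $i=1$ or $\pi_{i-1}<\pi_i$, a descent bottom if $\pi_{i-1}>\pi_i$. $\mathsf{RunDec}(\pi)=(D^{(0)}_\pi,A^{(1)}_\pi,D^{(1)}_\pi,A^{(2)}_\pi,\ldots)$ with $D^{(0)}_\pi=\{0\}$ followed by the letter sets of the maximal factors of $\pi$ consisting alternately of ascent tops ($A$-blocks) and descent bottoms ($D$-blocks). A (stable) decorated permutation is $(\pi,(a_1,\ldots,a_n))$ with $0\le a_i<|\{j\in A^{(k)}_\pi: j>i,\ k\le\ell\}|$ if $i\in D^{(\ell)}_\pi$ and $0\le a_i<|\{j\in D^{(k)}_\pi: j<i,\ k<\ell\}|$ if $i\in A^{(\ell)}_\pi$. It is canonical if moreover $a_i<\mu_i(\pi)$ for all $i$, where $\mu_i(\pi)=|\{j\in A^{(\ell)}_\pi: j>i\}|$ if $i\in D^{(\ell)}_\pi$ and $\mu_i(\pi)=|\{j\in D^{(\ell-1)}_\pi: j<i\}|$ if $i\in A^{(\ell)}_\pi$. *)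

From mathcomp Require Import all_boot all_order all_algebra.
Set Implicit Arguments. Unset Strict Implicit. Unset Printing Implicit Defensive.
Import GRing.Theory Num.Theory.

(* A Ferrers diagram of semiperimeter n+1 is encoded by the set R of labels
   of its rows (subset of {0,...,n}); columns are the complement.  The
   boundary path starts with a vertical step (row 0) and ends with a
   horizontal one (column n). *)
Definition ferrers (n : nat) (R : {set 'I_n.+1}) : bool :=
  (ord0 \in R) && (ord_max \notin R).

(* 0/1 fillings: functions on 'I_n.+1 * 'I_n.+1; entry (i,j) = cell in row i,
   column j; EW-tableaux are required to be false outside the cells of F. *)
Definition tab (n : nat) := {ffun 'I_n.+1 * 'I_n.+1 -> bool}.

(* configurations: functions nat -> nat, only values at 1..n are meaningful *)
Definition conf := nat -> nat.

Inductive reach (step : conf -> conf -> Prop) : conf -> conf -> Prop :=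
| reach_refl c : reach step c c
| reach_step c d e : step c d -> reach step d e -> reach step c e.

Section Ferrers.
Variables (n : nat) (R : {set 'I_n.+1}).

Definition isR (i : nat) : bool := (i < n.+1) && (inord i \in R).
Definition isC (i : nat) : bool := (i < n.+1) && (inord i \notin R).
Definition cell (i j : nat) : bool := [&& isR i, isC j & i < j].

Definition adj (i j : nat) : bool := cell i j || cell j i.
Definition deg (v : nat) : nat := count (adj v) (iota 0 n.+1).

Definition nonsink (v : nat) : bool := (1 <= v) && (v <= n).
Definition conf_eq (c d : conf) : Prop := forall v, nonsink v -> c v = d v.

Definition stable (c : conf) : Prop := forall v, nonsink v -> c v < deg v.
Definition add_grain (v : nat) (c : conf) : conf :=
  fun u => if u == v then (c u).+1 else c u.
Definition topple (v : nat) (c : conf) : conf :=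
  fun u => if u == v then c u - deg v
           else if nonsink u && adj v u then (c u).+1 else c u.
Definition sp_step (c d : conf) : Prop :=
  (exists2 v, nonsink v & d = add_grain v c) \/
  (exists v, [/\ nonsink v, deg v <= c v & d = topple v c]).
Definition cmax : conf := fun v => (deg v).-1.

Definition Rec (c : conf) : Prop :=
  stable c /\ exists2 d, reach sp_step cmax d & conf_eq d c.

(* canonical toppling: phase 0 topples the sink; phase p >= 1 topples
   simultaneously all unstable non-sink vertices that are columns (p odd) or
   rows (p even). *)
Definition inS (d : conf) (p v : nat) : bool :=
  [&& nonsink v, (if odd p then isC v else isR v) & deg v <= d v].

Fixpoint cfg (c : conf) (p : nat) : conf :=
  match p with
  | 0 => fun u => c u + adj 0 u
  | p'.+1 => let d := cfg c p' in
      fun u => d u - (if inS d p u then deg u else 0)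
               + count (fun v => inS d p v && adj v u) (iota 1 n)
  end.

(* level of a vertex in CanonTop(c) = (U0, V1, U1, V2, U2, ...):
   U^(0) has level 0, V^(k) has level 2k-1, U^(k) has level 2k. *)
Definition lev (c : conf) (v : nat) : nat :=
  if v == 0 then 0
  else (find (fun p => inS (cfg c p) p.+1 v) (iota 0 (2 * n + 2))).+1.

Definition minrec (c : conf) : conf := fun j =>
  if odd (lev c j) then
    count (fun l => ~~ odd (lev c l) && (lev c j < lev c l) && (l < j)) (iota 0 n.+1)
  else
    count (fun l => odd (lev c l) && (lev c j < lev c l) && (j < l)) (iota 0 n.+1).

Definition ent (T : tab n) (i j : nat) : bool := T (inord i, inord j).

Definition EWtab (T : tab n) : bool :=
  [&& [forall i : 'I_n.+1, forall j : 'I_n.+1, ~~ cell i j ==> ~~ T (i, j)],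
      [forall j : 'I_n.+1, cell 0 j ==> T (ord0, j)],
      [forall i : 'I_n.+1, (isR i && (i != 0 :> nat)) ==>
          [exists j : 'I_n.+1, cell i j && ~~ T (i, j)]] &
      [forall r1 : 'I_n.+1, forall r2 : 'I_n.+1, forall c1 : 'I_n.+1,
        forall c2 : 'I_n.+1,
        [&& isR r1, isR r2, isC c1, isC c2, r1 < r2, c1 < c2 & r2 < c1] ==>
        ~~ ([&& ~~ T (r1, c1), ~~ T (r2, c2), T (r1, c2) & T (r2, c1)] ||
            [&& ~~ T (r1, c2), ~~ T (r2, c1), T (r1, c1) & T (r2, c2)])]].

Definition phiTC (T : tab n) : conf := fun v =>
  if isR v then count (fun j => cell v j && ent T v j) (iota 0 n.+1)
  else count (fun r => cell r v && ~~ ent T r v) (iota 0 n.+1).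

Definition phiCT (m : conf) : option (tab n) :=
  [pick T : tab n | EWtab T && [forall i : 'I_n, phiTC T i.+1 == m i.+1]].

Definition RecEW (T : tab n) (a : 'I_n -> int) : Prop :=
  exists x, [/\ Rec x, phiCT (minrec x) = Some T &
    forall i : 'I_n, a i = ((x i.+1)%:Z - (minrec x i.+1)%:Z)%R].

Definition Psi (T : tab n) : seq nat :=
  let c := phiTC T in
  flatten [seq (let s := [seq v <- iota 1 n | lev c v == p] in
                if odd p then s else rev s) | p <- iota 1 (2 * n + 2)].

End Ferrers.

Section Perm.
Variable n : nat.
Variable pi : seq nat.

(* the letter at position k (0-based) is an ascent top *)
Definition asc_top (k : nat) : bool := (k == 0) || (nth 0 pi k.-1 < nth 0 pi k).

(* block level in RunDec(pi) = (D0, A1, D1, A2, ...):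
   D^(0) = {0} level 0, A^(k) level 2k-1, D^(k) level 2k *)
Definition poslev (k : nat) : nat :=
  (count (fun j => asc_top j != asc_top j.-1) (iota 1 k)).+1.
Definition plev (x : nat) : nat := if x == 0 then 0 else poslev (index x pi).

Definition stable_bound (i : nat) : nat :=
  if odd (plev i) then
    count (fun j => ~~ odd (plev j) && (plev j < plev i) && (j < i)) (iota 0 n.+1)
  else
    count (fun j => odd (plev j) && (plev j < plev i) && (i < j)) (iota 0 n.+1).

Definition mu (i : nat) : nat :=
  if odd (plev i) then
    count (fun j => ~~ odd (plev j) && (plev j == (plev i).-1) && (j < i)) (iota 0 n.+1)
  else
    count (fun j => odd (plev j) && (plev j == (plev i).-1) && (i < j)) (iota 0 n.+1).

(* a_i is stored at index i-1 of a : 'I_n -> int *)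
Definition decperm (a : 'I_n -> int) : Prop :=
  perm_eq pi (iota 1 n) /\
  forall i : 'I_n, (0 <= a i)%R /\ (a i < (stable_bound i.+1)%:Z)%R.

Definition canon_decperm (a : 'I_n -> int) : Prop :=
  decperm a /\ forall i : 'I_n, (a i < (mu i.+1)%:Z)%R.

End Perm.

From mathcomp Require Import all_boot all_order all_algebra.
From mathcomp Require Import zify.
Set Implicit Arguments. Unset Strict Implicit. Unset Printing Implicit Defensive.

(* Give each vertex its level: the index of the phase of the canonical
   toppling in which it topples (the sink has level 0, columns odd and rows
   even levels).  A stable configuration is recurrent iff every vertex
   topples: a recurrent configuration has no forbidden subconfiguration
   (Dhar), which forces every vertex to topple within 2n+2 phases; conversely
   a configuration in which every vertex topples is reached from c_max by
   loading the sink and toppling level by level (burning).  The levels L of c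
   are characterised by the window
     #{w ~ v, L w > L v} <= c v < #{w ~ v, L w > L v} + #{w ~ v, L w = L v - 1}.
   Its lower end is minrec c, and phi_CT (minrec c) is the EW-tableau that
   orients each edge towards the higher level.  Psi lists the vertices level
   by level, increasing on odd and decreasing on even levels; since every
   vertex has a neighbour one level below, each change of level is a change
   of run, so the blocks of RunDec (Psi T) are the levels and
   mu_i (Psi T) = #{w ~ i, L w = L i - 1}.  Canonical decorations are
   therefore exactly the offsets c - minrec c allowed by the window. *)

Lemma odd_sub2 m : 2 <= m -> odd (m - 2) = odd m.
Proof. by move=> le2m; rewrite -{2}(subnK le2m) oddD addbF. Qed.

Lemma pairwise_rev (T : Type) (r : rel T) s :
  pairwise r (rev s) = pairwise (fun x y => r y x) s.
Proof.
by elim: s => // x s IH; rewrite rev_cons pairwise_rcons all_rev IH pairwise_cons.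
Qed.

Lemma perm_flatten_filter (T U : eqType) (f : T -> U) (s : seq T) (ps : seq U) :
  uniq ps -> all (fun x => f x \in ps) s ->
  perm_eq (flatten [seq [seq x <- s | f x == p] | p <- ps]) s.
Proof.
elim: ps s => [|p ps IH] s; first by case: s.
rewrite cons_uniq => /andP[p_notin uniq_ps] all_s /=.
have -> : flatten [seq [seq x <- s | f x == q] | q <- ps] =
    flatten [seq [seq x <- [seq x <- s | f x != p] | f x == q] | q <- ps].
  congr flatten; apply/eq_in_map => q q_ps; rewrite -filter_predI.
  apply: eq_filter => x /=; case: eqP => //= ->.
  by apply/esym; apply: contraNneq p_notin => <-.
rewrite (perm_catl _ (IH _ uniq_ps _)) ?perm_filterC //.
rewrite all_filter; apply: sub_all all_s => x /=; rewrite in_cons.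
by case: eqP.
Qed.

Section Ferrers.
Variables (n : nat) (R : {set 'I_n.+1}).
Hypothesis F_ferrers : ferrers R.

Lemma isCE i : i < n.+1 -> isC R i = ~~ isR R i.
Proof. by rewrite /isC /isR => ->. Qed.

Lemma row_notC i : isR R i -> isC R i = false.
Proof. by case/andP=> lt_i_n1 r; rewrite isCE /isR ?lt_i_n1 ?r. Qed.

Lemma col_notR i : isC R i -> isR R i = false.
Proof. by case/andP=> lt_i_n1 c; rewrite /isR lt_i_n1 /= -[_ \in R]negbK c. Qed.

Lemma isR0 : isR R 0.
Proof. by case/andP: F_ferrers => r0 _; rewrite /isR /= (inord_val ord0). Qed.

Lemma isCn : isC R n.
Proof. by case/andP: F_ferrers => _ cn; rewrite /isC ltnSn /= (inord_val ord_max). Qed.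

Lemma n_gt0 : 0 < n.
Proof.
rewrite lt0n; apply/negP => /eqP n0; have := congr1 (isC R) n0.
by rewrite isCn row_notC ?isR0.
Qed.

Lemma nonsink_lt v : nonsink n v -> v < n.+1.
Proof. by rewrite /nonsink; lia. Qed.

Lemma nonsink_iota v : v \in iota 1 n -> nonsink n v.
Proof. by rewrite mem_iota /nonsink; lia. Qed.

Lemma nonsink_ord (i : 'I_n) : nonsink n i.+1.
Proof. by rewrite /nonsink ltn_ord. Qed.

Lemma nonsinkP v : nonsink n v -> exists i : 'I_n, v = i.+1.
Proof.
move=> ns_v; have lt_v_n : v.-1 < n by move: ns_v; rewrite /nonsink; lia.
by exists (Ordinal lt_v_n); rewrite /= prednK //; case/andP: ns_v.
Qed.

Lemma isR_nonsink v : nonsink n v -> isR R v = ~~ isC R v.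
Proof. by move/nonsink_lt/isCE ->; rewrite negbK. Qed.

Lemma adjC u w : adj R u w = adj R w u.
Proof. by rewrite /adj orbC. Qed.

Lemma adj_row u w : isR R u -> adj R u w = isC R w && (u < w).
Proof. by move=> r; rewrite /adj /cell r (row_notC r) /= andbF orbF. Qed.

Lemma adj_col u w : isC R u -> adj R u w = isR R w && (w < u).
Proof.
move=> c; rewrite /adj /cell c (col_notR c) /=.
by case: (isR R w); rewrite ?andbT.
Qed.

Lemma adj_lt u w : adj R u w -> (u < n.+1) && (w < n.+1).
Proof.
by rewrite /adj /cell => /orP[] /and3P[/andP[-> _] /andP[-> _] _].
Qed.

Lemma adj_neq u w : adj R u w -> u != w.
Proof. by rewrite /adj /cell neq_ltn => /orP[] /and3P[_ _ ->]; rewrite ?orbT. Qed.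

Lemma adj_isR u w : adj R u w -> isR R u = isC R w.
Proof.
rewrite /adj /cell => /orP[] /and3P[r c _]; first by rewrite r c.
by rewrite (col_notR c) (row_notC r).
Qed.

Lemma adj0 w : adj R 0 w = isC R w.
Proof.
rewrite adj_row ?isR0 //; case c: (isC R w) => //=; rewrite lt0n.
by apply: contraTneq c => ->; rewrite row_notC ?isR0.
Qed.

Definition deg_on (v : nat) (P : pred nat) :=
  count (fun w => adj R v w && P w) (iota 0 n.+1).

Lemma deg_on_predT v : deg R v = deg_on v predT.
Proof. by apply: eq_count => w; rewrite andbT. Qed.

Lemma eq_deg_on v (P Q : pred nat) :
  (forall w, w < n.+1 -> adj R v w -> P w = Q w) -> deg_on v P = deg_on v Q.
Proof.
move=> eqPQ; apply: eq_in_count => w; rewrite mem_iota add0n => lt_w.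
by case a: (adj R v w) => //=; rewrite eqPQ.
Qed.

Lemma deg_on_sub v (P Q : pred nat) :
  (forall w, adj R v w -> P w -> Q w) -> deg_on v P <= deg_on v Q.
Proof. by move=> PQ; apply: sub_count => w /andP[a /(PQ w a)]; rewrite a. Qed.

Lemma deg_on_pred0 v : deg_on v pred0 = 0.
Proof. by rewrite /deg_on (eq_count (a2 := pred0)) ?count_pred0 // => w; rewrite andbF. Qed.

Lemma deg_on_le v P : deg_on v P <= deg R v.
Proof. by rewrite deg_on_predT; apply: deg_on_sub. Qed.

Lemma deg_on_split v (P Q : pred nat) :
  deg_on v P = deg_on v (fun w => P w && Q w) + deg_on v (fun w => P w && ~~ Q w).
Proof.
rewrite /deg_on; elim: (iota 0 n.+1) => //= w s ->.
by case: (adj R v w); case: (P w); case: (Q w) => /=; lia.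
Qed.

Lemma deg_on_predC v (P : pred nat) : deg R v = deg_on v P + deg_on v (predC P).
Proof. by rewrite deg_on_predT (deg_on_split v predT P). Qed.

Lemma deg_on_sink u (P : pred nat) :
  deg_on u P = adj R u 0 && P 0 + count (fun w => adj R u w && P w) (iota 1 n).
Proof. by []. Qed.

Lemma deg_on_gt0 v w (P : pred nat) : w < n.+1 -> adj R v w -> P w -> 0 < deg_on v P.
Proof.
by move=> lt_w a Pw; rewrite -has_count; apply/hasP; exists w; rewrite ?mem_iota ?a.
Qed.

Lemma deg_on_lt_deg v w (P : pred nat) : w < n.+1 -> adj R v w -> ~~ P w ->
  deg_on v P < deg R v.
Proof.
move=> lt_w a nPw; rewrite (deg_on_predC v P).
by have := @deg_on_gt0 v w (predC P) lt_w a nPw; lia.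
Qed.

Lemma deg_on_ltP v (P Q : pred nat) : deg_on v P < deg_on v Q ->
  exists w, [/\ w < n.+1, adj R v w, Q w & ~~ P w].
Proof.
move=> lt_PQ.
have : 0 < deg_on v (fun w => Q w && ~~ P w).
  have : deg_on v (fun w => Q w && P w) <= deg_on v P by apply: deg_on_sub => w _ /andP[].
  by move: lt_PQ; rewrite (deg_on_split v Q P); lia.
rewrite -has_count => /hasP[w]; rewrite mem_iota add0n => lt_w /and3P[a Qw nPw].
by exists w.
Qed.

Lemma deg_on_pred1 u v : deg_on u (pred1 v) <= adj R u v.
Proof.
case a: (adj R u v).
  apply: leq_trans (_ : count (pred1 v) (iota 0 n.+1) <= 1).
    by apply: sub_count => w /andP[].
  by rewrite count_uniq_mem ?iota_uniq //; case: (_ \in _).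
rewrite leqn0 -(count_pred0 (iota 0 n.+1)); apply/eqP/eq_count => w /=.
by case: eqP => [->|]; rewrite ?a ?andbF.
Qed.

(** * Levels of the canonical toppling *)

(* The configuration after phases 0..p of the canonical toppling if the
   vertices toppled so far are those of level at most p under L, each once. *)
Definition phase_conf (c : conf) (L : nat -> nat) (p : nat) : conf := fun u =>
  c u + deg_on u (fun w => L w <= p) - (if L u <= p then deg R u else 0).

(* The second clause says these topplings were legal, so the truncated
   subtraction in [phase_conf] is exact. *)
Definition cfg_spec (c : conf) (L : nat -> nat) (p : nat) :=
  (forall u, nonsink n u -> cfg R c p u = phase_conf c L p u) /\
  (forall u, nonsink n u -> L u <= p -> deg R u <= c u + deg_on u (fun w => L w <= p)).

Definition lev_pos (L : nat -> nat) := L 0 = 0 /\ forall v, nonsink n v -> 0 < L v.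

Lemma deg_on_le0 u L : lev_pos L -> deg_on u (fun w => L w <= 0) = adj R u 0.
Proof.
move=> [L0 L_gt0]; rewrite deg_on_sink L0 leqnn andbT.
rewrite (@eq_in_count _ _ pred0) ?count_pred0 ?addn0 // => w /nonsink_iota ns_w /=.
by rewrite leqn0 (negbTE (lt0n_neq0 (L_gt0 w ns_w))) andbF.
Qed.

Lemma deg_on_leS u L p : deg_on u (fun w => L w <= p.+1) =
  deg_on u (fun w => L w <= p) + deg_on u (fun w => L w == p.+1).
Proof.
rewrite (deg_on_split u _ (fun w => L w <= p)); congr (_ + _); apply: eq_deg_on => w _ _.
  by rewrite andb_idl // => /leqW.
by rewrite -ltnNge eqn_leq andbC.
Qed.

Lemma cfg_spec0 c L : lev_pos L -> cfg_spec c L 0.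
Proof.
move=> L_pos; have [L0 L_gt0] := L_pos.
split=> u ns_u; last by move: (L_gt0 u ns_u); lia.
rewrite /phase_conf /= leqn0 (negbTE (lt0n_neq0 (L_gt0 u ns_u))) subn0.
by rewrite deg_on_le0 // adjC.
Qed.

Lemma cfg_specS c L p : lev_pos L -> cfg_spec c L p ->
  (forall v, nonsink n v -> inS R (cfg R c p) p.+1 v = (L v == p.+1)) ->
  cfg_spec c L p.+1.
Proof.
move=> [L0 L_gt0] [cfgE legal] inSE.
have fired u : count (fun v => inS R (cfg R c p) p.+1 v && adj R v u) (iota 1 n)
    = deg_on u (fun w => L w == p.+1).
  rewrite deg_on_sink L0 andbF add0n; apply: eq_in_count => w /nonsink_iota ns_w.
  by rewrite inSE // andbC adjC.
have legal' u : nonsink n u -> L u <= p.+1 ->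
    deg R u <= c u + deg_on u (fun w => L w <= p).
  move=> ns_u; rewrite leq_eqVlt => /orP[/eqP Lu|]; last exact: legal.
  move: (inSE u ns_u); rewrite Lu eqxx /inS => /and3P[_ _].
  by rewrite cfgE // /phase_conf Lu ltnn subn0.
split=> u ns_u; last by rewrite deg_on_leS => /(legal' u ns_u); lia.
rewrite /= fired inSE // cfgE // /phase_conf deg_on_leS.
have := legal' u ns_u; case: (L u =P p.+1) => Lu; case: (leqP (L u) p) => Lp;
  case: (leqP (L u) p.+1) => LSp; lia.
Qed.

Local Notation K := (2 * n + 2).

Lemma lev0 c : lev R c 0 = 0.
Proof. by []. Qed.

Lemma levE c v : nonsink n v ->
  lev R c v = (find (fun p => inS R (cfg R c p) p.+1 v) (iota 0 K)).+1.
Proof. by rewrite /nonsink /lev; case: v. Qed.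

Lemma lev_le c v : lev R c v <= K.+1.
Proof.
rewrite /lev; case: (v == 0) => //; rewrite ltnS.
by rewrite -[X in _ <= X](size_iota 0 K) find_size.
Qed.

Lemma lev_pos_lev c : lev_pos (lev R c).
Proof. by split=> // v ns_v; rewrite levE. Qed.

Lemma inS_lev c v q : nonsink n v -> lev R c v = q.+1 -> q < K ->
  inS R (cfg R c q) q.+1 v.
Proof.
move=> ns_v; rewrite levE // => -[levv] lt_q.
have := @nth_find _ 0 (fun p => inS R (cfg R c p) p.+1 v) (iota 0 K).
by rewrite has_find size_iota levv nth_iota // add0n; apply.
Qed.

Lemma lev_le_inS c v p : nonsink n v -> p < K -> inS R (cfg R c p) p.+1 v ->
  lev R c v <= p.+1.
Proof.
move=> ns_v lt_p inSv; rewrite levE // ltnS leqNgt; apply/negP => lt_p_lev.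
have := @before_find _ 0 (fun p => inS R (cfg R c p) p.+1 v) (iota 0 K) p lt_p_lev.
by rewrite nth_iota // inSv.
Qed.

Lemma not_inS_before_lev c v p : nonsink n v -> p.+1 < lev R c v ->
  ~~ inS R (cfg R c p) p.+1 v.
Proof.
move=> ns_v; rewrite levE // ltnS => lt_p_lev.
have := @before_find _ 0 (fun p => inS R (cfg R c p) p.+1 v) (iota 0 K) p lt_p_lev.
have lt_p : p < K.
  by apply: leq_trans lt_p_lev _; rewrite -[X in _ <= X](size_iota 0 K) find_size.
by rewrite nth_iota // => ->.
Qed.

Lemma cfg_spec_lev c : stable R c -> forall p, p <= K -> cfg_spec c (lev R c) p.
Proof.
move=> st; elim=> [|p IH] lt_p; first exact: cfg_spec0 (lev_pos_lev c).
have spec := IH (ltnW lt_p); apply: (cfg_specS (lev_pos_lev c) spec) => v ns_v.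
case: (lev R c v =P p.+1) => levv; first exact: inS_lev.
apply/negP => inSv; have := lev_le_inS ns_v lt_p inSv.
rewrite leq_eqVlt (introF eqP levv) ltnS /= => le_lev_p.
move: inSv; rewrite /inS => /and3P[_ _]; rewrite spec.1 // /phase_conf le_lev_p.
by move: (st v ns_v) (deg_on_le v (fun w => lev R c w <= p)); lia.
Qed.

Lemma phase_class v q : nonsink n v ->
  (if odd q then isC R v else isR R v) = (odd q == isC R v).
Proof. by move=> ns_v; rewrite isR_nonsink //; case: (odd q); case: (isC R v). Qed.

Definition level_fun (L : nat -> nat) := L 0 = 0 /\
  forall v, nonsink n v -> [/\ 0 < L v, L v <= K & odd (L v) = isC R v].

Definition level_window (c : conf) (L : nat -> nat) := forall v, nonsink n v ->
  deg_on v (fun w => L v < L w) <= c v /\ c v < deg_on v (fun w => (L v).-1 <= L w).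

Lemma level_fun_pos L : level_fun L -> lev_pos L.
Proof. by case=> L0 L_fun; split=> // v /L_fun[]. Qed.

Lemma level_fun_odd L : level_fun L -> forall w, w < n.+1 -> odd (L w) = isC R w.
Proof.
case=> L0 L_fun w lt_w; case: (posnP w) => [->|w_gt0]; first by rewrite L0 row_notC ?isR0.
by case: (L_fun w) => //; rewrite /nonsink w_gt0 -ltnS.
Qed.

Lemma level_fun_adj_odd L : level_fun L -> forall u w, adj R u w -> odd (L u) = ~~ odd (L w).
Proof.
move=> L_fun u w a; case/andP: (adj_lt a) => lt_u lt_w.
by rewrite !(level_fun_odd L_fun) // (isCE lt_u) (adj_isR a) (isCE lt_w) negbK.
Qed.

Lemma level_fun_adj_neq L : level_fun L -> forall u w, adj R u w -> L u != L w.
Proof.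
move=> L_fun u w a; apply/negP => /eqP Luw.
by have := level_fun_adj_odd L_fun a; rewrite Luw; case: (odd _).
Qed.

Lemma inS_window c L p : level_fun L -> level_window c L -> cfg_spec c L p ->
  forall v, nonsink n v -> inS R (cfg R c p) p.+1 v = (L v == p.+1).
Proof.
move=> L_fun win [cfgE _] v ns_v; have [L_gt0 _ oddL] := L_fun.2 v ns_v.
have [lo up] := win v ns_v.
rewrite /inS ns_v phase_class // -oddL cfgE // /phase_conf.
case: (L v =P p.+1) => [Lv|neLv].
  rewrite Lv eqxx ltnn subn0 /= (deg_on_predC v (fun w => L w <= p)).
  suff: deg_on v (predC (fun w => L w <= p)) <= deg_on v (fun w => L v < L w) by lia.
  apply: deg_on_sub => w a /=; rewrite -ltnNge.
  by have := level_fun_adj_neq L_fun a; rewrite Lv; lia.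
case: (leqP (L v) p) => [le_Lv_p|lt_p_Lv]; apply/negP => /andP[_].
  by move: (deg_on_le v (fun w => L w <= p)) (deg_on_le v (fun w => (L v).-1 <= L w)) up; lia.
suff: deg_on v (fun w => (L v).-1 <= L w) <= deg_on v (predC (fun w => L w <= p)).
  by move: (deg_on_predC v (fun w => L w <= p)) up; lia.
by apply: deg_on_sub => w _ /=; lia.
Qed.

Lemma cfg_spec_window c L : level_fun L -> level_window c L -> forall p, cfg_spec c L p.
Proof.
move=> L_fun win; elim=> [|p IH]; first exact: cfg_spec0 (level_fun_pos L_fun).
exact: cfg_specS (level_fun_pos L_fun) IH (inS_window L_fun win IH).
Qed.

Lemma lev_window c L : level_fun L -> level_window c L ->
  forall v, nonsink n v -> lev R c v = L v.
Proof.
move=> L_fun win v ns_v; have [L_gt0 L_le _] := L_fun.2 v ns_v.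
have inSE q := inS_window L_fun win (cfg_spec_window L_fun win q) ns_v.
apply/eqP; rewrite eqn_leq; apply/andP; split.
  by rewrite -(prednK L_gt0) lev_le_inS ?inSE ?prednK //; lia.
rewrite leqNgt; apply/negP => lt_lev.
case E: (lev R c v) lt_lev ((lev_pos_lev c).2 v ns_v) => [|q] // lt_q _.
have lt_q_K : q < K by lia.
by have := inS_lev ns_v E lt_q_K; rewrite inSE => /eqP Lv; move: lt_q; rewrite Lv ltnn.
Qed.

Lemma window_pred_nbr c L : level_fun L -> level_window c L -> forall v, nonsink n v ->
  exists w, [/\ w < n.+1, adj R v w & L w = (L v).-1].
Proof.
move=> L_fun win v ns_v; have [lo up] := win v ns_v.
have /deg_on_ltP[w [lt_w a ge_w /negP lt_w']] : deg_on v (fun w => L v < L w) <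
  deg_on v (fun w => (L v).-1 <= L w) by lia.
exists w; split=> //; have := level_fun_adj_neq L_fun a; move: ge_w lt_w'; lia.
Qed.

Section StableLevels.
Variable c : conf.
Hypothesis c_stable : stable R c.
Local Notation L := (lev R c).

Lemma inS_at_lev v : nonsink n v -> L v <= K ->
  inS R (cfg R c (L v).-1) (L v) v.
Proof.
move=> ns_v le_K; have L_gt0 := (lev_pos_lev c).2 v ns_v.
by rewrite -{2}(prednK L_gt0); apply: inS_lev; rewrite ?prednK //; lia.
Qed.

Lemma odd_lev v : nonsink n v -> L v <= K -> odd (L v) = isC R v.
Proof.
by move=> ns_v /(inS_at_lev ns_v); rewrite /inS phase_class // => /and3P[_ /eqP].
Qed.

Lemma unstable_at_lev v : nonsink n v -> L v <= K ->
  deg R v <= c v + deg_on v (fun w => L w <= (L v).-1).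
Proof.
move=> ns_v le_K; have L_gt0 := (lev_pos_lev c).2 v ns_v.
move: (inS_at_lev ns_v le_K) => /and3P[_ _].
rewrite (cfg_spec_lev c_stable (_ : (L v).-1 <= K)).1 //; last by lia.
by rewrite /phase_conf; move: L_gt0; case: leqP; lia.
Qed.

Lemma stable_before_lev v : nonsink n v -> L v <= K -> 2 <= L v ->
  c v + deg_on v (fun w => L w <= L v - 3) < deg R v.
Proof.
move=> ns_v le_K le2L; have oddL := odd_lev ns_v le_K.
case: (leqP 3 (L v)) => [le3L|lt3L].
  have := @not_inS_before_lev c v (L v - 3) ns_v ltac:(lia).
  rewrite /inS ns_v phase_class // (cfg_spec_lev c_stable (_ : L v - 3 <= K)).1 //; last by lia.
  have -> : odd (L v - 3).+1 = odd (L v) by rewrite -{2}(subnK le3L) addn3 /= negbK.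
  rewrite oddL eqxx /phase_conf ifF ?subn0 -?ltnNge //.
  by apply/negbTE; rewrite -ltnNge; lia.
have Lv2 : L v = 2 by lia.
have r_v : isR R v by rewrite isR_nonsink // -oddL Lv2.
rewrite Lv2 /= (@eq_deg_on v _ pred0).
  by rewrite deg_on_pred0 addn0 c_stable.
move=> w lt_w; rewrite adj_row // => /andP[c_w _] /=.
have w_gt0 : 0 < w by case: (posnP w) c_w => // ->; rewrite row_notC ?isR0.
by rewrite leqn0 (negbTE (lt0n_neq0 ((lev_pos_lev c).2 w _))) // /nonsink w_gt0 -ltnS.
Qed.

Lemma lev_pred_nbr v : nonsink n v -> L v <= K ->
  exists w, [/\ w < n.+1, adj R v w & L w = (L v).-1].
Proof.
move=> ns_v le_K; have L_gt0 := (lev_pos_lev c).2 v ns_v; have oddL := odd_lev ns_v le_K.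
case: (leqP 2 (L v)) => [le2L|lt2L]; last first.
  have Lv1 : L v = 1 by lia.
  by exists 0; rewrite adjC adj0 -oddL Lv1.
have := unstable_at_lev ns_v le_K; have := stable_before_lev ns_v le_K le2L => lt_deg le_deg.
have /deg_on_ltP[w [lt_w a le_w /negP gt_w]] :
  deg_on v (fun w => L w <= L v - 3) < deg_on v (fun w => L w <= (L v).-1) by lia.
exists w; split; [exact: lt_w | exact: a |].
suff : L w != L v - 2 by move: le_w gt_w; lia.
have w_gt0 : 0 < w by case: (posnP w) le_w gt_w => // ->; rewrite lev0; lia.
have oddLw : odd (L w) = isC R w.
  by apply: odd_lev; [rewrite /nonsink w_gt0 -ltnS | lia].
apply/eqP => Lw; move: oddLw; rewrite Lw odd_sub2 // oddL -(adj_isR a) isR_nonsink //.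
by case: (isC R v).
Qed.

Lemma lev_descent d v : nonsink n v -> L v <= K -> d < L v ->
  exists w, nonsink n w /\ L w = L v - d.
Proof.
elim: d v => [|d IH] v ns_v le_K lt_d; first by exists v; rewrite subn0.
have [w [ns_w Lw]] := IH v ns_v le_K (ltnW lt_d).
have [u [lt_u _ Lu]] := lev_pred_nbr ns_w ltac:(lia).
exists u; split; last by lia.
case: (posnP u) Lu => [->|u_gt0] Lu; first by rewrite lev0 in Lu; lia.
by rewrite /nonsink u_gt0 -ltnS.
Qed.

Lemma lev_le_n v : nonsink n v -> L v <= K -> L v <= n.
Proof.
move=> ns_v le_K.
have sub : {subset iota 1 (L v) <= [seq L w | w <- iota 1 n]}.
  move=> k; rewrite mem_iota => /andP[le1k ltk].
  have [w [ns_w Lw]] := @lev_descent (L v - k) v ns_v le_K ltac:(lia).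
  apply/mapP; exists w; first by rewrite mem_iota; move: ns_w; rewrite /nonsink; lia.
  by lia.
by have := uniq_leq_size (iota_uniq 1 (L v)) sub; rewrite size_iota size_map size_iota.
Qed.

Hypothesis lev_le_K : forall v, nonsink n v -> L v <= K.

Lemma level_fun_lev : level_fun L.
Proof.
split=> // v ns_v; split; [exact: (lev_pos_lev c).2 | exact: lev_le_K |].
exact: odd_lev (lev_le_K ns_v).
Qed.

Lemma level_window_lev : level_window c L.
Proof.
move=> v ns_v; have le_K := lev_le_K ns_v; split.
  have := unstable_at_lev ns_v le_K; rewrite (deg_on_predC v (fun w => L w <= (L v).-1)).
  suff: deg_on v (fun w => L v < L w) <=
    deg_on v (predC (fun w => L w <= (L v).-1)) by lia.
  by apply: deg_on_sub => w _ /=; lia.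
case: (leqP 2 (L v)) => [le2L|lt2L].
  have := stable_before_lev ns_v le_K le2L.
  rewrite (deg_on_predC v (fun w => L w <= L v - 3)).
  suff: deg_on v (predC (fun w => L w <= L v - 3)) <=
    deg_on v (fun w => (L v).-1 <= L w) by lia.
  apply: deg_on_sub => w a /=; rewrite -ltnNge => lt_w.
  have := level_fun_adj_odd level_fun_lev a; case: (L w =P L v - 2) => [->|]; last lia.
  by rewrite odd_sub2 //; case: (odd _).
have Lv1 : L v = 1 by have := (lev_pos_lev c).2 v ns_v; lia.
by rewrite Lv1 /= (@eq_deg_on v _ predT) -?deg_on_predT ?c_stable.
Qed.

End StableLevels.

(** * Recurrence *)

Definition no_forbidden_subconf (c : conf) :=
  forall S : pred nat, (forall v, S v -> nonsink n v) -> (exists v, S v) ->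
  exists v, S v /\ deg_on v S <= c v.

Lemma lev_le_K c : stable R c -> no_forbidden_subconf c ->
  forall v, nonsink n v -> lev R c v <= K.
Proof.
move=> st no_fsc v0 ns_v0; rewrite leqNgt; apply/negP => lt_K_v0.
pose S v := nonsink n v && (K < lev R c v).
have [v [/andP[ns_v lt_K_v] le_S]] : exists v, S v /\ deg_on v S <= c v.
  by apply: no_fsc => [v /andP[] //|]; exists v0; rewrite /S ns_v0.
(* By phase p.+1, which has the class of v, every vertex outside S has toppled. *)
pose p := if odd n.+1 == isC R v then n else n.+1.
have odd_p : odd p.+1 = isC R v.
  by rewrite /p; case: eqP => //=; case: (odd n); case: (isC R v).
have le_p_K : p <= K by rewrite /p; case: ifP; lia.
have lt_p_v : p.+1 < lev R c v by move: (lev_le c v) lt_K_v; rewrite /p; case: ifP; lia.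
have := not_inS_before_lev ns_v lt_p_v.
rewrite /inS ns_v phase_class // odd_p eqxx (cfg_spec_lev st le_p_K).1 // /phase_conf.
rewrite ifF; last by apply/negbTE; rewrite -ltnNge; lia.
rewrite subn0 -ltnNge (deg_on_predC v (fun w => lev R c w <= p)).
suff: deg_on v (predC (fun w => lev R c w <= p)) <= deg_on v S by lia.
apply: deg_on_sub => w a /=; rewrite -ltnNge => lt_p_w.
have ns_w : nonsink n w.
  case: (posnP w) lt_p_w => [->|w_gt0]; first by rewrite lev0.
  by case/andP: (adj_lt a); rewrite /nonsink w_gt0; lia.
rewrite /S ns_w /= ltnNge; apply/negP => /(lev_le_n st ns_w).
by move: lt_p_w; rewrite /p; case: ifP; lia.
Qed.

Lemma no_forbidden_subconf_cmax : no_forbidden_subconf (cmax R).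
Proof.
move=> S S_ns [v0 S_v0]; have ns_v0 := S_ns v0 S_v0.
have nS0 : ~~ S 0 by apply/negP => /S_ns.
case: (boolP (has (fun w => S w && isC R w) (iota 1 n))) => [|/hasPn noC].
  case/hasP=> w _ /andP[S_w c_w]; exists w; split=> //.
  have := @deg_on_lt_deg w 0 S (ltn0Sn n); rewrite adjC adj0 /cmax => /(_ c_w nS0).
  by lia.
have notC v : S v -> isC R v = false.
  move=> S_v; apply: negbTE; apply: contraTN isT => c_v.
  have /noC : v \in iota 1 n by rewrite mem_iota; move: (S_ns v S_v); rewrite /nonsink; lia.
  by rewrite S_v c_v.
have nSn : ~~ S n by apply/negP => /notC; rewrite isCn.
exists v0; split=> //; have r_v0 : isR R v0 by rewrite isR_nonsink // notC.
have a : adj R v0 n.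
  rewrite adj_row // isCn /= ltn_neqAle; case/andP: ns_v0 => _ ->; rewrite andbT.
  by apply: contraTneq r_v0 => ->; rewrite col_notR ?isCn.
by have := deg_on_lt_deg (ltnSn n) a nSn; rewrite /cmax; lia.
Qed.

Lemma no_forbidden_subconf_step c d :
  no_forbidden_subconf c -> sp_step R c d -> no_forbidden_subconf d.
Proof.
move=> no_fsc [[v _ ->]|[v [ns_v _ ->]]] S S_ns S_ne.
  have [u [S_u le_u]] := no_fsc S S_ns S_ne; exists u; split=> //.
  by rewrite /add_grain; case: (_ == _); lia.
case S_v: (S v); last first.
  have [u [S_u le_u]] := no_fsc S S_ns S_ne; exists u; split=> //.
  rewrite /topple ifF; first by case: (_ && _); lia.
  by apply/negbTE; apply: contraTneq S_u => ->; rewrite S_v.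
pose S' w := S w && (w != v).
case: (boolP (has S' (iota 1 n))) => [/hasP[u0 _ S'_u0]|noS'].
  have [u [/andP[S_u ne_uv] le_u]] : exists u, S' u /\ deg_on u S' <= c u.
    by apply: no_fsc; [move=> w /andP[/S_ns] | exists u0].
  exists u; split=> //; rewrite /topple (negbTE ne_uv) (S_ns u S_u) /=.
  have := deg_on_split u S (fun w => w != v).
  have : deg_on u (fun w => S w && ~~ (w != v)) <= deg_on u (pred1 v).
    by apply: deg_on_sub => w _; rewrite negbK => /andP[].
  by have := deg_on_pred1 u v; rewrite adjC /S' in le_u *; case: (adj R v u) => /=; lia.
exists v; split=> //; rewrite (_ : deg_on v S = 0) //.
rewrite /deg_on (eq_count (a2 := pred0)) ?count_pred0 // => w /=.
case a: (adj R v w) => //=; apply/negP => S_w; move/hasP: noS'; apply; exists w.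
  by rewrite mem_iota; have := S_ns w S_w; rewrite /nonsink; lia.
by rewrite /S' S_w eq_sym adj_neq.
Qed.

Lemma no_forbidden_subconf_reach c d :
  no_forbidden_subconf c -> reach (sp_step R) c d -> no_forbidden_subconf d.
Proof.
move=> no_fsc_c r; elim: r no_fsc_c => // x y z st _ IH no_fsc_x.
exact/IH/(no_forbidden_subconf_step no_fsc_x st).
Qed.

Lemma Rec_no_forbidden_subconf x : Rec R x -> no_forbidden_subconf x.
Proof.
case=> _ [d r eq_dx] S S_ns S_ne.
have [v [S_v le_v]] := no_forbidden_subconf_reach no_forbidden_subconf_cmax r S_ns S_ne.
by exists v; rewrite -eq_dx ?S_ns.
Qed.

Definition reachable (c d : conf) :=
  exists2 d', reach (sp_step R) c d' & conf_eq n d' d.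

Lemma reach_trans c d e :
  reach (sp_step R) c d -> reach (sp_step R) d e -> reach (sp_step R) c e.
Proof. by elim=> // x y z s _ IH /IH; apply: reach_step. Qed.

Lemma reach_conf_eq c c' d : conf_eq n c c' -> reach (sp_step R) c d ->
  exists2 d', reach (sp_step R) c' d' & conf_eq n d d'.
Proof.
move=> eq_cc' r; elim: r c' eq_cc' => [x|x y z s _ IH] c' eq_xc'.
  by exists c' => //; constructor.
have [y' s' eq_yy'] : exists2 y', sp_step R c' y' & conf_eq n y y'.
  case: s => [[v ns_v ->]|[v [ns_v le_deg ->]]].
    by exists (add_grain v c'); [left; exists v | move=> u ns_u; rewrite /add_grain eq_xc'].
  exists (topple R v c'); first by right; exists v; rewrite -eq_xc'.
  by move=> u ns_u; rewrite /topple eq_xc'.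
by have [z' r' eq_zz'] := IH y' eq_yy'; exists z' => //; apply: reach_step s' r'.
Qed.

Lemma reachable_conf_eq c d : conf_eq n c d -> reachable c d.
Proof. by exists c => //; constructor. Qed.

Lemma reachable_step c d : sp_step R c d -> reachable c d.
Proof. by move=> s; exists d; [apply: reach_step s (reach_refl _ _) | move]. Qed.

Lemma reachable_trans c d e : reachable c d -> reachable d e -> reachable c e.
Proof.
move=> [d' r1 eq1] [e' r2 eq2].
have [e'' r3 eq3] := reach_conf_eq (fun v ns_v => esym (eq1 v ns_v)) r2.
by exists e''; [apply: reach_trans r1 r3 | move=> v ns_v; rewrite -eq3 ?eq2].
Qed.

Lemma reachable_add_at v k c : nonsink n v ->
  reachable c (fun u => if u == v then c u + k else c u).
Proof.
move=> ns_v; elim: k => [|k IH].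
  by apply: reachable_conf_eq => u _; case: eqP; rewrite ?addn0.
apply: reachable_trans IH (reachable_trans (reachable_step _) (reachable_conf_eq _)).
  by left; exists v.
by move=> u _; rewrite /add_grain; case: eqP; rewrite ?addnS.
Qed.

Lemma reachable_add c d : (forall v, nonsink n v -> c v <= d v) -> reachable c d.
Proof.
move=> le_cd.
suff /(_ (iota 1 n)) : forall s, all (nonsink n) s ->
    reachable c (fun u => if u \in s then d u else c u).
  case=> [|d' r eq_d']; first by apply/allP => v /nonsink_iota.
  by exists d' => // u ns_u; rewrite eq_d' // mem_iota ifT //; move: ns_u; rewrite /nonsink; lia.
elim=> [_|v s IH /= /andP[ns_v ns_s]]; first exact: reachable_conf_eq.
set c_s := fun u => if u \in s then d u else c u.
apply: reachable_trans (IH ns_s) (reachable_trans (reachable_add_at (d v - c_s v) c_s ns_v) _).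
apply: reachable_conf_eq => u ns_u; rewrite /c_s in_cons.
case: (u =P v) => [->|] //=; have := le_cd v ns_v.
by case: (v \in s) => /=; lia.
Qed.

Definition topple_set (s : seq nat) (d : conf) : conf := fun u =>
  (if u \in s then d u - deg R u else d u) +
  (if nonsink n u then count (fun v => adj R v u) s else 0).

Lemma reachable_topple_set s d : uniq s -> all (nonsink n) s ->
  {in s &, forall v w, ~~ adj R v w} -> {in s, forall v, deg R v <= d v} ->
  reachable d (topple_set s d).
Proof.
elim: s d => [|v s IH] d.
  by move=> *; apply: reachable_conf_eq => u ns_u; rewrite /topple_set ns_u addn0.
rewrite cons_uniq => /andP[v_notin_s uniq_s] /= /andP[ns_v ns_s] indep unstable.
have adj_vs w : w \in s -> adj R v w = false.
  by move=> w_s; apply/negbTE/indep; rewrite ?mem_head // in_cons w_s orbT.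
apply: reachable_trans (reachable_step _) (reachable_trans (IH (topple R v d) _ _ _ _) _).
- by right; exists v; split=> //; apply: unstable; rewrite mem_head.
- exact: uniq_s.
- exact: ns_s.
- by move=> x y x_s y_s; apply: indep; rewrite in_cons ?x_s ?y_s orbT.
- move=> w w_s; have := unstable w; rewrite in_cons w_s orbT => /(_ isT).
  rewrite /topple ifF; first by case: (_ && _); lia.
  by apply/negbTE; apply: contraNneq v_notin_s => <-.
apply: reachable_conf_eq => u ns_u; rewrite /topple_set /topple in_cons ns_u /=.
case: (u =P v) => [->|ne_uv].
  have -> : adj R v v = false by apply/negP => /adj_neq/eqP.
  by rewrite (negbTE v_notin_s).
case u_s: (u \in s) => /=; first by rewrite adj_vs.
by case: (adj R v u) => /=; lia.
Qed.

Lemma count_adj_filter u (P : pred nat) : P 0 = false ->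
  count (fun v => adj R v u) [seq v <- iota 1 n | P v] = deg_on u P.
Proof.
move=> P0; rewrite count_filter deg_on_sink P0 andbF add0n.
by apply: eq_count => v /=; rewrite adjC andbC.
Qed.

Section Burning.
Variables (x : conf) (L : nat -> nat).
Hypothesis L_fun : level_fun L.
Hypothesis x_ge : forall v, nonsink n v -> deg_on v (fun w => L v < L w) <= x v.

Definition sink_loaded (k : nat) : conf := fun u => x u + k * adj R 0 u.

Lemma burn_phase k p :
  reachable (phase_conf (sink_loaded k) L p) (phase_conf (sink_loaded k) L p.+1).
Proof.
have legal u : nonsink n u -> L u <= p.+1 ->
    deg R u <= sink_loaded k u + deg_on u (fun w => L w <= p).
  move=> ns_u le_u; rewrite (deg_on_predC u (fun w => L u < L w)).
  have : deg_on u (predC (fun w => L u < L w)) <= deg_on u (fun w => L w <= p).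
    by apply: deg_on_sub => w a /=; have := level_fun_adj_neq L_fun a; lia.
  by have := x_ge ns_u; rewrite /sink_loaded; lia.
pose s := [seq v <- iota 1 n | L v == p.+1].
have mem_s u : nonsink n u -> (u \in s) = (L u == p.+1).
  move=> ns_u; rewrite mem_filter mem_iota.
  have -> : (1 <= u < 1 + n) = true by move: ns_u; rewrite /nonsink; lia.
  by rewrite andbT.
apply: reachable_trans (reachable_topple_set (s := s) _ _ _ _) (reachable_conf_eq _).
- exact: filter_uniq (iota_uniq 1 n).
- by apply/allP => v; rewrite mem_filter => /andP[_ /nonsink_iota].
- move=> v w; rewrite !mem_filter => /andP[/eqP Lv _] /andP[/eqP Lw _].
  by apply/negP => /(level_fun_adj_neq L_fun); rewrite Lv Lw eqxx.
- move=> v; rewrite mem_filter => /andP[/eqP Lv /nonsink_iota ns_v].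
  by rewrite /phase_conf Lv ltnn subn0 legal ?Lv.
move=> u ns_u; rewrite /topple_set mem_s // ns_u count_adj_filter ?L_fun.1 //.
rewrite [in RHS]/phase_conf deg_on_leS /phase_conf.
have := legal u ns_u; case: (L u =P p.+1) => Lu; case: (leqP (L u) p) => Lp;
  case: (leqP (L u) p.+1) => LSp; lia.
Qed.

Lemma sink_loadedS k : conf_eq n (sink_loaded k.+1) (phase_conf (sink_loaded k) L 0).
Proof.
move=> u ns_u; have [L_gt0 _ _] := L_fun.2 u ns_u.
rewrite /phase_conf (deg_on_le0 _ (level_fun_pos L_fun)) leqn0 (negbTE (lt0n_neq0 L_gt0)).
by rewrite /sink_loaded adjC mulSn; lia.
Qed.

Lemma phase_conf_K c : conf_eq n (phase_conf c L K) c.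
Proof.
move=> u ns_u; have [_ le_K _] := L_fun.2 u ns_u.
rewrite /phase_conf le_K (@eq_deg_on u _ predT) -?deg_on_predT ?addnK // => w lt_w _.
case: (posnP w) => [->|w_gt0]; first by rewrite L_fun.1.
by case: (L_fun.2 w) => //; rewrite /nonsink w_gt0 -ltnS.
Qed.

(* Toppling the sink and then every vertex once, level by level, gives back
   the configuration. *)
Lemma burn k : reachable (sink_loaded k) x.
Proof.
elim: k => [|k IH].
  by apply: reachable_conf_eq => u _; rewrite /sink_loaded mul0n addn0.
apply: reachable_trans (reachable_conf_eq (sink_loadedS k)) _.
apply: reachable_trans _ (reachable_trans (reachable_conf_eq (phase_conf_K _)) IH).
elim: K => [|p IHp]; first exact: reachable_conf_eq.
exact: reachable_trans IHp (burn_phase k p).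
Qed.

Lemma deg_le_n1 u : deg R u <= n.+1.
Proof. by apply: leq_trans (count_size _ _) _; rewrite size_iota. Qed.

(* Rows are not adjacent to the sink: they are loaded and toppled once first. *)
Lemma reachable_cmax : reachable (cmax R) x.
Proof.
pose nsR v := (0 < v) && isR R v.
pose E : conf := fun u => x u + K * adj R 0 u + (if isR R u then deg R u else 0) -
   (if isC R u then deg_on u nsR else 0).
apply: (@reachable_trans _ E).
  apply: reachable_add => u ns_u; rewrite /cmax /E adj0.
  move: (deg_le_n1 u) (deg_on_le u nsR).
  by rewrite isR_nonsink //; case: (isC R u) => /=; lia.
apply: reachable_trans (reachable_topple_set (s := [seq v <- iota 1 n | nsR v]) _ _ _ _)
  (reachable_trans (reachable_conf_eq _) (burn K)).
- exact: filter_uniq (iota_uniq 1 n).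
- by apply/allP => v; rewrite mem_filter => /andP[_ /nonsink_iota].
- move=> v w; rewrite !mem_filter => /andP[/andP[_ r_v] _] /andP[/andP[_ r_w] _].
  by apply/negP => /adj_isR; rewrite r_v row_notC.
- move=> v; rewrite mem_filter => /andP[/andP[_ r_v] _].
  by rewrite /E r_v row_notC // adj0 row_notC //; lia.
move=> u ns_u; rewrite /topple_set count_adj_filter // mem_filter mem_iota.
have -> : (1 <= u < 1 + n) = true by move: ns_u; rewrite /nonsink; lia.
rewrite /nsR /E /sink_loaded adj0 ns_u andbT isR_nonsink //.
have u_gt0 : 0 < u by case/andP: ns_u.
case c_u: (isC R u) => /=; rewrite ?u_gt0 /=.
  by rewrite -/nsR; move: (deg_on_le u nsR) (deg_le_n1 u); lia.
rewrite (@eq_deg_on u _ pred0) ?deg_on_pred0 ?muln0 ?addn0 ?subn0 ?addnK // => w _.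
have r_u : isR R u by rewrite isR_nonsink ?c_u.
by rewrite adj_row // => /andP[/col_notR r_w _]; rewrite /nsR r_w andbF.
Qed.
End Burning.

Lemma Rec_level_window x : Rec R x -> level_fun (lev R x) /\ level_window x (lev R x).
Proof.
move=> rec_x; have le_K := lev_le_K rec_x.1 (Rec_no_forbidden_subconf rec_x).
by split; [exact: level_fun_lev le_K | exact: level_window_lev rec_x.1 le_K].
Qed.

Lemma window_stable c L : level_window c L -> stable R c.
Proof. by move=> win v ns_v; have [_ /leq_trans] := win v ns_v; apply; apply: deg_on_le. Qed.

Lemma window_Rec x L : level_fun L -> level_window x L -> Rec R x.
Proof.
move=> L_fun win; split; first exact: window_stable win.
by have [d r eq_d] := reachable_cmax L_fun (fun v ns_v => (win v ns_v).1); exists d.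
Qed.

Definition lev_floor (L : nat -> nat) (v : nat) := deg_on v (fun w => L v < L w).
Definition lev_slack (L : nat -> nat) (v : nat) := deg_on v (fun w => L w == (L v).-1).

Lemma level_windowE c L : level_fun L -> level_window c L <->
  forall v, nonsink n v -> lev_floor L v <= c v < lev_floor L v + lev_slack L v.
Proof.
move=> L_fun.
have split_ge v : nonsink n v ->
    deg_on v (fun w => (L v).-1 <= L w) = lev_floor L v + lev_slack L v.
  move=> ns_v; have [L_gt0 _ _] := L_fun.2 v ns_v.
  rewrite (deg_on_split v _ (fun w => L v < L w)); congr (_ + _); apply: eq_deg_on => w _ a.
    by apply/andP/idP => [[]//|lt_w]; split=> //; lia.
  have /eqP ne_w := level_fun_adj_neq L_fun a.
  by apply/andP/eqP => [[le_w /negP lt_w]|->]; [lia | split; lia].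
split=> win v ns_v; have := win v ns_v; rewrite split_ge //; first by case=> -> ->.
by case/andP.
Qed.

(** * EW-tableaux as orientations *)

Lemma deg_on_sub_eq v (P Q : pred nat) : (forall w, adj R v w -> P w -> Q w) ->
  deg_on v Q <= deg_on v P -> forall w, w < n.+1 -> adj R v w -> P w = Q w.
Proof.
move=> PQ le_QP w lt_w a; apply/idP/idP => [/(PQ w a) //|Qw]; apply/negPn/negP => nPw.
have : deg_on v P <= deg_on v (fun w => Q w && P w).
  by apply: deg_on_sub => u au Pu; rewrite Pu (PQ u au).
have := @deg_on_gt0 v w (fun w => Q w && ~~ P w) lt_w a; rewrite Qw nPw.
by move: le_QP; rewrite (deg_on_split v Q P); lia.
Qed.

Section EWTableau.
Variable T : tab n.
Hypothesis T_EW : EWtab R T.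

(* T orients the edge {i, j} (i a row, j a column) from i to j iff T(i, j) = 1. *)
Definition tab_out (v w : nat) := if isR R v then ent T v w else ~~ ent T w v.

Lemma phiTC_out v : nonsink n v -> phiTC R T v = deg_on v (tab_out v).
Proof.
move=> ns_v; rewrite /phiTC /deg_on /tab_out; case r_v: (isR R v).
  by apply: eq_count => w; rewrite /adj /cell r_v (row_notC r_v) /= andbF orbF.
apply: eq_count => w; rewrite /adj /cell r_v /=.
by have -> : isC R v by rewrite isCE ?r_v ?nonsink_lt.
Qed.

Lemma tab_out_sink w : adj R 0 w -> tab_out 0 w.
Proof.
move=> a; rewrite /tab_out isR0 /ent (inord_val ord0).
case/and4P: T_EW => _ /forallP /(_ (inord w)) + _ _.
have lt_w : w < n.+1 by case/andP: (adj_lt a).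
rewrite inordK // => /implyP; apply.
by move: a; rewrite adj_row ?isR0 // /cell isR0.
Qed.

Lemma tab_out_sym v w : adj R v w -> tab_out w v = ~~ tab_out v w.
Proof.
move=> a; case/andP: (adj_lt a) => lt_v lt_w; have := adj_isR a; rewrite /tab_out.
case r_v: (isR R v) => c_w; first by rewrite col_notR.
have r_w : isR R w by rewrite -[isR R w]negbK -isCE // -c_w.
by rewrite r_w negbK.
Qed.

Lemma phiTC_stable : stable R (phiTC R T).
Proof.
move=> v ns_v; rewrite phiTC_out //; have lt_v := nonsink_lt ns_v.
case r_v: (isR R v).
  case/and4P: T_EW => _ _ /forallP /(_ (inord v)) + _.
  rewrite inordK // r_v /= => /implyP /(_ _) /existsP [].
    by move: ns_v; rewrite /nonsink; lia.
  move=> j /andP[c_vj nT]; apply: (@deg_on_lt_deg v j) => //; first by rewrite /adj c_vj.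
  by rewrite /tab_out r_v /ent inord_val.
have c_v : isC R v by rewrite isCE ?r_v.
apply: (@deg_on_lt_deg v 0) => //; first by rewrite adjC adj0.
have := @tab_out_sink v; rewrite /tab_out r_v negbK isR0 adj0; exact.
Qed.

Section Levels.
Variable L : nat -> nat.
Hypothesis L_fun : level_fun L.
Hypothesis floor_le : forall v, nonsink n v -> lev_floor L v <= phiTC R T v.

(* Induction on the level of v: lower neighbours of v point to v, so the
   out-neighbours of v, which are at least as many as the higher ones, are
   exactly the higher ones. *)
Lemma tab_out_lev_lt m v w : L v < m -> v < n.+1 -> adj R v w -> tab_out v w = (L v < L w).
Proof.
elim: m v w => // m IH v w lt_m lt_v a.
have lower u : adj R v u -> L u < L v -> tab_out v u = false.
  move=> au lt_u; have lt_un : u < n.+1 by case/andP: (adj_lt au).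
  have := IH u v ltac:(lia) lt_un; rewrite adjC => /(_ au) out_uv.
  by rewrite -[tab_out v u]negbK -tab_out_sym // out_uv lt_u.
case: (posnP v) lt_v a lower => [-> _ a _|v_gt0 lt_v a lower].
  have ns_w : nonsink n w.
    case/andP: (adj_lt a) => _ lt_w; rewrite /nonsink -[w <= n]ltnS lt_w andbT lt0n.
    by apply: contraTneq a => ->; rewrite adj0 row_notC ?isR0.
  by have [L_gt0 _ _] := L_fun.2 w ns_w; rewrite L_fun.1 L_gt0 tab_out_sink.
have ns_v : nonsink n v by rewrite /nonsink v_gt0 -ltnS.
have lt_w : w < n.+1 by case/andP: (adj_lt a).
apply: (@deg_on_sub_eq v (tab_out v) (fun w => L v < L w) _ _ w lt_w a).
  move=> u au out_u.
  case: (ltngtP (L v) (L u)) => // [lt_u|eq_u]; first by rewrite lower in out_u.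
  by have := level_fun_adj_neq L_fun au; rewrite eq_u eqxx.
by rewrite -phiTC_out //; apply: floor_le.
Qed.

Lemma tab_lev (i j : 'I_n.+1) : T (i, j) = cell R i j && (L i < L j).
Proof.
case c_ij: (cell R i j); last first.
  case/and4P: T_EW => /forallP /(_ i) /forallP /(_ j) + _ _ _.
  by rewrite c_ij => /negbTE.
have a : adj R i j by rewrite /adj c_ij.
have := @tab_out_lev_lt (L i).+1 i j (ltnSn _) (ltn_ord i) a.
by rewrite /tab_out; case/and3P: c_ij => -> _ _; rewrite /ent !inord_val.
Qed.

Lemma phiTC_floor v : nonsink n v -> phiTC R T v = lev_floor L v.
Proof.
move=> ns_v; rewrite phiTC_out //; apply: eq_deg_on => w _ a.
exact: tab_out_lev_lt (ltnSn _) (nonsink_lt ns_v) a.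
Qed.

End Levels.
End EWTableau.

(** * The word Psi and its run decomposition *)

Section LevelWord.
Variable L : nat -> nat.
Hypothesis L_fun : level_fun L.
Hypothesis pred_nbr : forall v, nonsink n v ->
  exists w, [/\ w < n.+1, adj R v w & L w = (L v).-1].

Definition level_block p :=
  let s := [seq v <- iota 1 n | L v == p] in if odd p then s else rev s.
Definition level_word := flatten [seq level_block p | p <- iota 1 K].

Lemma mem_level_block p v : (v \in level_block p) = (L v == p) && (v \in iota 1 n).
Proof. by rewrite /level_block; case: (odd p); rewrite ?mem_rev mem_filter. Qed.

Lemma level_word_perm : perm_eq level_word (iota 1 n).
Proof.
have lev_in : all (fun v => L v \in iota 1 K) (iota 1 n).
  apply/allP => v /nonsink_iota ns_v; have [L_gt0 L_le _] := L_fun.2 v ns_v.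
  by rewrite mem_iota; lia.
apply: perm_trans (perm_flatten_filter (iota_uniq 1 K) lev_in).
apply/permP => a; rewrite !count_flatten -!map_comp; congr sumn; apply/eq_map => p /=.
by rewrite /level_block; case: (odd p); rewrite ?count_rev.
Qed.

Lemma size_level_word : size level_word = n.
Proof. by rewrite (perm_size level_word_perm) size_iota. Qed.

Definition level_order x y :=
  (L x < L y) || ((L x == L y) && (if odd (L x) then x < y else y < x)).

Lemma level_word_pairwise : pairwise level_order level_word.
Proof.
have sorted_iota : pairwise ltn (iota 1 n).
  by rewrite -sorted_pairwise ?iota_ltn_sorted //; apply: ltn_trans.
suff gen m p : pairwise level_order (flatten [seq level_block q | q <- iota p m]).
  exact: gen.
elim: m p => // m IH p.
rewrite [iota _ _]/= [map _ _]/= [flatten _]/= pairwise_cat IH andbT; apply/andP; split.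
  apply/allrelP => x y; rewrite mem_level_block => /andP[/eqP Lx _].
  case/flattenP => _ /mapP[q q_in ->]; rewrite mem_level_block => /andP[/eqP Ly _].
  by move: q_in; rewrite mem_iota /level_order Lx Ly => le_q; apply/orP; left; lia.
rewrite /level_block; case odd_p: (odd p); last rewrite pairwise_rev.
all: apply: (sub_in_pairwise (P := fun v => L v == p)) (filter_all _ _)
  (pairwise_filter _ sorted_iota) => x y /eqP Lx /eqP Ly lt_xy.
all: by rewrite /level_order Lx Ly ltnn eqxx odd_p.
Qed.

Local Notation ell k := (L (nth 0 level_word k)).

Lemma nonsink_nth k : k < n -> nonsink n (nth 0 level_word k).
Proof.
move=> lt_k; apply: nonsink_iota; rewrite -(perm_mem level_word_perm) mem_nth //.
by rewrite size_level_word.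
Qed.

Lemma index_level_word w : nonsink n w ->
  index w level_word < n /\ nth 0 level_word (index w level_word) = w.
Proof.
move=> ns_w; have w_in : w \in level_word.
  by rewrite (perm_mem level_word_perm) mem_iota; move: ns_w; rewrite /nonsink; lia.
by rewrite -size_level_word index_mem nth_index.
Qed.

Lemma level_order_nth i j : i < j -> j < n ->
  level_order (nth 0 level_word i) (nth 0 level_word j).
Proof.
move=> lt_ij lt_j; apply: (pairwiseP 0 level_word_pairwise) => //.
  by rewrite inE size_level_word; apply: ltn_trans lt_j.
by rewrite inE size_level_word.
Qed.

Lemma ell_mono i j : i <= j -> j < n -> ell i <= ell j.
Proof.
rewrite leq_eqVlt => /orP[/eqP -> //|lt_ij lt_j].
by case/orP: (level_order_nth lt_ij lt_j) => [/ltnW|/andP[/eqP -> _]].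
Qed.

Lemma nonsink_lev_gt0 w : w < n.+1 -> 0 < L w -> nonsink n w.
Proof.
move=> lt_w; case: (posnP w) => [->|w_gt0]; first by rewrite L_fun.1.
by rewrite /nonsink w_gt0 -ltnS.
Qed.

Lemma ell_step k : k.+1 < n -> ell k.+1 <= (ell k).+1.
Proof.
move=> lt_k; rewrite leqNgt; apply/negP => lt_ell.
have [w [lt_w _ Lw]] := pred_nbr (nonsink_nth lt_k).
have [lt_iw nth_w] := index_level_word (nonsink_lev_gt0 lt_w ltac:(lia)).
case: (leqP (index w level_word) k) => le_iw.
  by have := ell_mono le_iw (ltnW lt_k); rewrite nth_w Lw; lia.
by have := ell_mono le_iw lt_iw; rewrite nth_w Lw; lia.
Qed.

Lemma ell0 : ell 0 = 1.
Proof.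
have [L_gt0 _ _] := L_fun.2 _ (nonsink_nth n_gt0).
case: (leqP (ell 0) 1) => [|lt1]; first by lia.
have [w [lt_w _ Lw]] := pred_nbr (nonsink_nth n_gt0).
have [lt_iw nth_w] := index_level_word (nonsink_lev_gt0 lt_w ltac:(lia)).
by have := ell_mono (leq0n _) lt_iw; rewrite nth_w Lw; lia.
Qed.

(* When the level goes up from x to y, y has a neighbour w at the level of x,
   placed before y, and the block order puts x between w and y. *)
Lemma asc_top_level_word k : k < n -> asc_top level_word k = odd (ell k).
Proof.
case: k => [|k] lt_k; first by rewrite ell0.
rewrite /asc_top /=.
set x := nth 0 level_word k; set y := nth 0 level_word k.+1.
have xy : level_order x y := level_order_nth (ltnSn k) lt_k.
case: (L x =P L y) => [Lxy|neLxy].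
  move: xy; rewrite /level_order Lxy ltnn eqxx /=; case: (odd (L y)) => // lt_yx.
  by apply/negbTE; rewrite -leqNgt ltnW.
have Ly : L y = (L x).+1.
  by have := ell_mono (leqnSn k) lt_k; have := ell_step lt_k; rewrite -/x -/y; lia.
have [w [lt_w a Lw]] := pred_nbr (nonsink_nth lt_k); rewrite -/y Ly /= in Lw.
have [Lx_gt0 _ _] := L_fun.2 x (nonsink_nth (ltnW lt_k)).
have [lt_iw nth_w] := index_level_word (nonsink_lev_gt0 lt_w ltac:(rewrite Lw; lia)).
have le_iw : index w level_word <= k.
  rewrite leqNgt; apply/negP => lt_ki.
  by have := ell_mono lt_ki lt_iw; rewrite nth_w Lw -/y Ly; lia.
have wx : if odd (L x) then w <= x else x <= w.
  move: le_iw; rewrite leq_eqVlt => /orP[/eqP iw|lt_iw'].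
    by rewrite -nth_w iw -/x; case: (odd _).
  have := level_order_nth lt_iw' (ltnW lt_k); rewrite nth_w -/x /level_order Lw ltnn eqxx /=.
  by case: (odd _) => /ltnW.
have ns_y : nonsink n y := nonsink_nth lt_k.
have odd_y := level_fun_odd L_fun (nonsink_lt ns_y); rewrite Ly /= in odd_y.
rewrite Ly /=; case odd_x: (odd (L x)) wx odd_y => wx odd_y /=.
  have r_y : isR R y by rewrite isR_nonsink // -odd_y.
  by move: a; rewrite adj_row // => /andP[_ lt_yw]; apply/negbTE; rewrite -leqNgt; lia.
by move: a; rewrite adj_col -?odd_y // => /andP[_ lt_wy]; lia.
Qed.

Lemma poslev_level_word k : k < n -> poslev level_word k = ell k.
Proof.
elim: k => [|k IH] lt_k; first by rewrite /poslev /= ell0.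
have iotaS : iota 1 k.+1 = iota 1 k ++ [:: k.+1].
  by rewrite -(addn1 k) iotaD /= add1n addn1.
move: (IH (ltnW lt_k)); rewrite /poslev iotaS count_cat /= addn0 => IHk.
rewrite (asc_top_level_word lt_k) (asc_top_level_word (ltnW lt_k)).
have := ell_mono (leqnSn k) lt_k; have := ell_step lt_k.
case: (ell k.+1 =P ell k) => [-> _ _|ne]; first by rewrite eqxx addn0.
move=> le_S ge_S; have -> : ell k.+1 = (ell k).+1 by lia.
by rewrite /=; case: (odd _) => /=; lia.
Qed.

Lemma plev_level_word v : v < n.+1 -> plev level_word v = L v.
Proof.
move=> lt_v; case: (posnP v) => [->|v_gt0]; first by rewrite L_fun.1.
have ns_v : nonsink n v by rewrite /nonsink v_gt0 -ltnS.
have [lt_iv nth_v] := index_level_word ns_v.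
by rewrite /plev (negbTE (lt0n_neq0 v_gt0)) poslev_level_word // nth_v.
Qed.

End LevelWord.

(** * Decorations *)

(* The neighbours of a column are the rows before it, which have even level;
   those of a row are the columns after it, which have odd level. *)
Lemma count_nbrs_by_parity (L' L : nat -> nat) (r : rel nat) i : level_fun L ->
  (forall j, j < n.+1 -> L' j = L j) -> nonsink n i ->
  (if odd (L' i) then count (fun l => ~~ odd (L' l) && r (L' i) (L' l) && (l < i)) (iota 0 n.+1)
   else count (fun l => odd (L' l) && r (L' i) (L' l) && (i < l)) (iota 0 n.+1))
  = deg_on i (fun w => r (L i) (L w)).
Proof.
move=> L_fun eqL ns_i; rewrite eqL ?nonsink_lt // (level_fun_odd L_fun (nonsink_lt ns_i)).
case c_i: (isC R i); apply: eq_in_count => w; rewrite mem_iota add0n => lt_w.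
  rewrite eqL // adj_col // (level_fun_odd L_fun lt_w) (isCE lt_w) negbK.
  by case: (isR R w); case: (r _ _); case: (w < i).
rewrite eqL // adj_row ?isR_nonsink ?c_i // (level_fun_odd L_fun lt_w).
by case: (isC R w); case: (r _ _); case: (i < w).
Qed.

Lemma lev_window_all c L : level_fun L -> level_window c L ->
  forall j, j < n.+1 -> lev R c j = L j.
Proof.
move=> L_fun win j lt_j; case: (posnP j) => [->|j_gt0]; first by rewrite L_fun.1.
by apply: lev_window; rewrite // /nonsink j_gt0 -ltnS.
Qed.

Lemma minrec_window c L : level_fun L -> level_window c L ->
  forall i, nonsink n i -> minrec R c i = lev_floor L i.
Proof.
move=> L_fun win i ns_i.
exact: (count_nbrs_by_parity ltn L_fun (lev_window_all L_fun win) ns_i).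
Qed.

Section Decorations.
Variables (pi : seq nat) (L : nat -> nat).
Hypothesis L_fun : level_fun L.
Hypothesis plevE : forall j, j < n.+1 -> plev pi j = L j.

Lemma mu_slack i : nonsink n i -> mu n pi i = lev_slack L i.
Proof. exact: (count_nbrs_by_parity (fun a b => b == a.-1) L_fun plevE). Qed.

Lemma stable_bound_below i : nonsink n i ->
  stable_bound n pi i = deg_on i (fun w => L w < L i).
Proof. exact: (count_nbrs_by_parity (fun a b => b < a) L_fun plevE). Qed.

End Decorations.

Lemma slack_le_below L v : 0 < L v ->
  lev_slack L v <= deg_on v (fun w => L w < L v).
Proof. by move=> L_gt0; apply: deg_on_sub => w _ /eqP ->; lia. Qed.

Lemma canon_decperm_level_word c L a : level_fun L -> level_window c L ->
  canon_decperm (level_word L) a <->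
  forall i : 'I_n, (0 <= a i)%R /\ (a i < (lev_slack L i.+1)%:Z)%R.
Proof.
move=> L_fun win; have pred_nbr := window_pred_nbr L_fun win.
have plevE := plev_level_word L_fun pred_nbr.
split=> [[[_ bnd] lt_mu] i|bounds].
  by have [a_ge0 _] := bnd i; split=> //; rewrite -(mu_slack L_fun plevE) ?nonsink_ord.
split=> [|i]; last by have [_] := bounds i; rewrite -(mu_slack L_fun plevE) ?nonsink_ord.
split=> [|i]; first exact: level_word_perm.
have [L_gt0 _ _] := L_fun.2 _ (nonsink_ord i).
have [a_ge0 a_lt] := bounds i; split=> //.
rewrite (stable_bound_below L_fun plevE) ?nonsink_ord //.
by have := slack_le_below L_gt0; lia.
Qed.

Lemma floor_window c d L : level_fun L -> level_window c L ->
  (forall v, nonsink n v -> d v = lev_floor L v) -> level_window d L.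
Proof.
move=> L_fun win d_floor; apply/(level_windowE _ L_fun) => v ns_v.
rewrite d_floor // leqnn /= -addn1 leq_add2l /lev_slack.
have [w [lt_w a Lw]] := window_pred_nbr L_fun win ns_v.
by apply: (deg_on_gt0 lt_w a); rewrite /= Lw.
Qed.

Lemma phiCT_Some m T : phiCT R m = Some T ->
  EWtab R T /\ forall i : 'I_n, phiTC R T i.+1 = m i.+1.
Proof.
rewrite /phiCT; case: pickP => // T' /andP[T'_EW /forallP phi] [<-].
by split=> // i; apply/eqP.
Qed.

Lemma phiCT_floor m T L : EWtab R T -> level_fun L ->
  (forall v, nonsink n v -> phiTC R T v = lev_floor L v) ->
  (forall i : 'I_n, m i.+1 = lev_floor L i.+1) -> phiCT R m = Some T.
Proof.
move=> T_EW L_fun phiT m_floor; rewrite /phiCT.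
case: pickP => [T' /andP[T'_EW /forallP phiT']|none].
  have floor_T' v : nonsink n v -> lev_floor L v <= phiTC R T' v.
    by case/nonsinkP=> i ->; rewrite (eqP (phiT' i)) m_floor.
  have floor_T v : nonsink n v -> lev_floor L v <= phiTC R T v by move=> ns_v; rewrite phiT.
  congr Some; apply/ffunP => -[i j].
  by rewrite (tab_lev T'_EW L_fun floor_T') (tab_lev T_EW L_fun floor_T).
move: (none T); rewrite T_EW /= => /negbT/forallPn[i].
by rewrite phiT ?nonsink_ord // m_floor eqxx.
Qed.

Lemma Psi_level_word T L : (forall v, nonsink n v -> lev R (phiTC R T) v = L v) ->
  Psi R T = level_word L.
Proof.
move=> levE; congr flatten; apply/eq_map => p; rewrite /level_block.
by rewrite (@eq_in_filter _ _ (fun v => L v == p)) // => v /nonsink_iota ns_v; rewrite levE.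
Qed.

Lemma Psi_perm_level_window T : EWtab R T -> perm_eq (Psi R T) (iota 1 n) ->
  level_fun (lev R (phiTC R T)) /\ level_window (phiTC R T) (lev R (phiTC R T)).
Proof.
move=> T_EW perm_Psi; have st := phiTC_stable T_EW.
suff le_K v : nonsink n v -> lev R (phiTC R T) v <= K.
  by split; [exact: level_fun_lev le_K | exact: level_window_lev st le_K].
move=> ns_v; have : v \in level_word (lev R (phiTC R T)).
  rewrite -[level_word _]/(Psi R T) (perm_mem perm_Psi) mem_iota.
  by move: ns_v; rewrite /nonsink; lia.
case/flattenP=> _ /mapP[p p_in ->]; rewrite mem_level_block => /andP[/eqP -> _].
by move: p_in; rewrite mem_iota; lia.
Qed.

Lemma RecEW_canon_decperm T a : RecEW R T a -> canon_decperm (Psi R T) a.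
Proof.
case=> x [rec_x /phiCT_Some[T_EW phiT] a_E].
have [L_fun win] := Rec_level_window rec_x.
have phiT_floor v : nonsink n v -> phiTC R T v = lev_floor (lev R x) v.
  by case/nonsinkP=> i ->; rewrite phiT (minrec_window L_fun win) ?nonsink_ord.
rewrite (Psi_level_word (lev_window L_fun (floor_window L_fun win phiT_floor))).
apply/(canon_decperm_level_word a L_fun win) => i.
have := (level_windowE _ L_fun).1 win _ (nonsink_ord i).
by rewrite a_E (minrec_window L_fun win) ?nonsink_ord; lia.
Qed.

Lemma canon_decperm_RecEW T a : EWtab R T -> canon_decperm (Psi R T) a -> RecEW R T a.
Proof.
move=> T_EW canon; have [L_fun win] := Psi_perm_level_window T_EW canon.1.1.
set L := lev R (phiTC R T) in L_fun win canon.
have phiT_floor := phiTC_floor T_EW L_fun (fun v ns_v => (win v ns_v).1).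
have /(canon_decperm_level_word a L_fun win) a_slack := canon.
pose x : conf := fun v => phiTC R T v + oapp (fun i : 'I_n => `|a i|%N) 0 (insub v.-1).
have xE (i : 'I_n) : x i.+1 = lev_floor L i.+1 + `|a i|%N.
  by rewrite /x /= (valK i) phiT_floor ?nonsink_ord.
have win_x : level_window x L.
  apply/(level_windowE _ L_fun) => _ /nonsinkP[i ->]; rewrite xE.
  by have := a_slack i; lia.
have minrec_x := minrec_window L_fun win_x.
exists x; split.
- exact: window_Rec L_fun win_x.
- by apply: phiCT_floor T_EW L_fun phiT_floor _ => i; rewrite minrec_x ?nonsink_ord.
- by move=> i; rewrite minrec_x ?nonsink_ord // xE; have := a_slack i; lia.
Qed.

End Ferrers.

Unset Implicit Arguments.

Theorem corollary5p5 (n : nat) (R : {set 'I_n.+1}) (T : tab n) (a : 'I_n -> int) :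
  ferrers R -> EWtab R T ->
  (RecEW R T a <-> @canon_decperm n (Psi R T) a).
Proof.
move=> F_ferrers T_EW; split; first exact: RecEW_canon_decperm.
exact: canon_decperm_RecEW.
Qed.
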